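(* Let $A$ be a linear matrix of the form $\begin{bmatrix} C_n\\ F\end{bmatrix}$. If $g=g(A)<n$, then there exists a matrix $F'$ consisting of $h\ge1$ rows of $F$ such that $\begin{bmatrix} C_n\\ F'\end{bmatrix}$ contains a submatrix congruent to $C_g$ as an up-matrix.
   Context: A $\{0,1\}$-matrix is linear if it has no $2\times2$ submatrix with all entries $1$. Matrices are congruent if one is obtained from the other by permuting rows and columns. $C_n$ is the $n\times n$ matrix with $c_{i,j}=1$ iff $j\in\{i,i+1\}$ (indices mod $n$). For a $\{0,1\}$-matrix $A$, $g(A)=\infty$ if $A$ contains no submatrix congruent to $C_k$ for odd $k$, and otherwise $g(A)$ is the least odd $k$ such that $A$ has a submatrix congruent to $C_k$. The up-matrix $M^\uparrow$ of $M$ is the row submatrix consisting of the rows $r$ for which no other row $r'\neq r$ satisfies $r\le r'$ componentwise. A matrix $M$ contains $N$ as an up-matrix if for some set $S$ of columns, the up-matrix of the column submatrix of $M$ on $S$ equals $N$. *)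

(* {0,1}-matrices are boolean matrices 'M[bool]_(r,c). *)
From mathcomp Require Import all_boot all_order all_algebra.
Set Implicit Arguments. Unset Strict Implicit. Unset Printing Implicit Defensive.

Definition Cmat (n : nat) : 'M[bool]_n :=
  \matrix_(i < n, j < n) ((j == i :> nat) || (j == (i.+1 %% n) :> nat)).

Definition linear_mx (r c : nat) (M : 'M[bool]_(r, c)) : Prop :=
  forall (i1 i2 : 'I_r) (j1 j2 : 'I_c), i1 != i2 -> j1 != j2 ->
    ~~ [&& M i1 j1, M i1 j2, M i2 j1 & M i2 j2].

(* M has a submatrix congruent to N (rows/columns chosen injectively,
   which absorbs the permutations of rows and columns) *)
Definition has_congr_sub (r c p q : nat) (M : 'M[bool]_(r, c))
  (N : 'M[bool]_(p, q)) : Prop :=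
  exists (f : 'I_p -> 'I_r) (g : 'I_q -> 'I_c),
    injective f /\ injective g /\ forall i j, M (f i) (g j) = N i j.

Definition is_g (r c : nat) (A : 'M[bool]_(r, c)) (k : nat) : Prop :=
  [/\ odd k, 3 <= k, has_congr_sub A (Cmat k) &
      forall k', odd k' -> 3 <= k' -> k' < k -> ~ has_congr_sub A (Cmat k')].

Definition dominated (r c : nat) (M : 'M[bool]_(r, c)) (S : {set 'I_c})
  (i i' : 'I_r) : bool :=
  [forall j in S, M i j ==> M i' j] && [exists j in S, M i j != M i' j].

Definition up_rows (r c : nat) (M : 'M[bool]_(r, c)) (S : {set 'I_c}) :
  {set 'I_r} := [set i | ~~ [exists i', dominated M S i i']].

Definition contains_up_congr (r c p q : nat) (M : 'M[bool]_(r, c))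
  (N : 'M[bool]_(p, q)) : Prop :=
  exists (S : {set 'I_c}) (f : 'I_p -> 'I_r) (g : 'I_q -> 'I_c),
    [/\ injective f, injective g, f @: setT = up_rows M S, g @: setT = S &
        forall i j, M (f i) (g j) = N i j].

From mathcomp Require Import all_boot all_order all_algebra.
From mathcomp Require Import zify.
Set Implicit Arguments. Unset Strict Implicit. Unset Printing Implicit Defensive.

(* Take a copy of [C_k], k = g(A), on rows R and columns S. It cannot lie
   inside [C_n] since k < n, so R meets F; let F' be the rows of F in R. In
   [C_n; F'] every row outside R is a row of [C_n], with at most two ones in S.
   Two ones would form a chord of the copy, and a chord of an odd cycle of a
   linear matrix yields a shorter odd cycle, against the minimality of k; so
   such a row is dominated by a row of the copy. Conversely a row dominating a
   row of the copy would share two ones with it, against linearity. Hence the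
   up-matrix on S is exactly the copy of [C_k]. *)

Lemma CmatE n (i j : 'I_n) : Cmat n i j = (j == i) || (j == ordS i).
Proof. by rewrite mxE. Qed.

Lemma CmatE_nat n (i j : 'I_n) :
  Cmat n i j = (j == i :> nat) || (j == i.+1 %% n :> nat).
Proof. by rewrite mxE. Qed.

Lemma ordS_neq n (i : 'I_n) : 1 < n -> (ordS i == i) = false.
Proof.
move=> n_gt1; rewrite -val_eqE /=; apply/negbTE.
have lt_in := ltn_ord i.
by case: (ltngtP i.+1 n) => [?|?|eq_n]; rewrite ?eq_n ?modnn ?modn_small //; lia.
Qed.

Lemma Cmat_diag n (i : 'I_n) : Cmat n i i.
Proof. by rewrite CmatE eqxx. Qed.

Lemma Cmat_ordS n (i : 'I_n) : Cmat n i (ordS i).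
Proof. by rewrite CmatE eqxx orbT. Qed.

Lemma val_iter_ordS n (c : 'I_n) j : val (iter j (@ordS n) c) = (c + j) %% n.
Proof.
elim: j => [|j IH] /=; first by rewrite addn0 modn_small.
by rewrite IH addnS -addn1 modnDml addn1.
Qed.

Lemma iter_ordS_eq n (c : 'I_n) i j : i < n -> j < n ->
  (iter i (@ordS n) c == iter j (@ordS n) c) = (i == j).
Proof.
move=> lt_in lt_jn; rewrite -val_eqE !val_iter_ordS.
by rewrite eqn_modDl !modn_small.
Qed.

Lemma iter_ordS_period n (c : 'I_n) : iter n (@ordS n) c = c.
Proof. by apply/val_inj; rewrite val_iter_ordS modnDr modn_small. Qed.

Lemma iter_ordS_dist n (a b : 'I_n) : iter ((b + n - a) %% n) (@ordS n) a = b.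
Proof.
apply/val_inj; rewrite val_iter_ordS modnDmr.
have -> : a + (b + n - a) = b + n by have := ltn_ord a; lia.
by rewrite modnDr modn_small.
Qed.

Lemma ordS_closed_setT n (S : {set 'I_n}) (c : 'I_n) :
  c \in S -> (forall d, d \in S -> ordS d \in S) -> S = setT.
Proof.
move=> cS S_closed; apply/setP => d; rewrite inE.
rewrite -(iter_ordS_dist c d); elim: (_ %% n) => [|j IH] //=.
exact: S_closed.
Qed.

(* The columns of a copy of [C_k] in [C_n] are closed under [ordS], hence are
   all of ['I_n]. *)
Lemma Cmat_no_sub_Cmat n k : 1 < k -> k < n -> ~ has_congr_sub (Cmat n) (Cmat k).
Proof.
move=> k_gt1 k_lt_n [f [g [f_inj [g_inj fgE]]]].
have n_gt1 : 1 < n by apply: ltn_trans k_lt_n.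
pose S := g @: setT.
have edge x : [set g x; g (ordS x)] = [set f x; ordS (f x)].
  apply/eqP; rewrite eqEcard !cards2 (inj_eq g_inj) ![_ == ordS _]eq_sym !ordS_neq //.
  rewrite andbT; apply/subsetP => y; rewrite !inE => /orP[]/eqP->.
    by rewrite -CmatE fgE Cmat_diag.
  by rewrite -CmatE fgE Cmat_ordS.
have edge_in x : [set f x; ordS (f x)] \subset S.
  by rewrite -edge; apply/subsetP => y; rewrite !inE => /orP[]/eqP->; apply: imset_f.
have fS : f @: setT = S.
  apply/eqP; rewrite eqEcard !card_imset // leqnn andbT.
  by apply/subsetP => _ /imsetP[x _ ->]; rewrite (subsetP (edge_in x)) ?set21.
have S_closed d : d \in S -> ordS d \in S.
  by rewrite -{1}fS => /imsetP[x _ ->]; rewrite (subsetP (edge_in x)) ?set22.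
have S_full : S = setT.
  exact: ordS_closed_setT (imset_f g (in_setT (Ordinal (ltnW k_gt1)))) S_closed.
have := card_imset setT g_inj; rewrite -/S S_full !cardsT !card_ord; lia.
Qed.

Section CycleInMatrix.

Variables (N c k : nat) (A : 'M[bool]_(N, c)) (f : 'I_k -> 'I_N) (g : 'I_k -> 'I_c).
Hypotheses (f_inj : injective f) (g_inj : injective g)
  (fgE : forall i j, A (f i) (g j) = Cmat k i j).

Lemma arc_congr_sub (r : 'I_N) (t : 'I_k) (L : nat) :
  r \notin codom f -> 1 < L <= k ->
  (forall y, A r (g y) = (y == t) || (y == iter L.-1 (@ordS k) t)) ->
  has_congr_sub A (Cmat L).
Proof.
move=> r_out /andP[L_gt1 L_le_k] rE.
pose arc (j : 'I_L) := iter j (@ordS k) t.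
have arc_eq (i : 'I_L) j : j < k -> (arc i == iter j (@ordS k) t) = (i == j :> nat).
  by move=> lt_jk; rewrite iter_ordS_eq //; apply: leq_trans L_le_k.
have arc_inj : injective arc.
  move=> i j /eqP; rewrite arc_eq => [/eqP/val_inj //|].
  exact: leq_trans (ltn_ord j) L_le_k.
have f_neq_r x : f x != r by apply: contraNneq r_out => <-; apply: codom_f.
pose f' (i : 'I_L) := if i < L.-1 then f (arc i) else r.
have f'_last (i : 'I_L) : ~~ (i < L.-1) -> i = L.-1 :> nat.
  by move=> i_last; have := ltn_ord i; lia.
exists f', (g \o arc); split; [|split].
- move=> i j; rewrite /f'; case: ifPn => lt_i; case: ifPn => lt_j.
  + by move/f_inj/arc_inj.
  + by move/eqP; rewrite (negbTE (f_neq_r _)).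
  + by move/esym/eqP; rewrite (negbTE (f_neq_r _)).
  + by move=> _; apply: ord_inj; rewrite (f'_last _ lt_i) (f'_last _ lt_j).
- exact: inj_comp.
- move=> i j; rewrite /f' CmatE_nat; case: ifPn => lt_i.
  + have lt_iL := ltn_ord i.
    by rewrite fgE CmatE -iterS !arc_eq ?modn_small //; lia.
  + rewrite rE -[X in (_ == X) || _]/(iter 0 (@ordS k) t) !arc_eq; try lia.
    rewrite (f'_last _ lt_i) prednK; last lia.
    by rewrite modnn orbC.
Qed.

Hypothesis k_gt1 : 1 < k.

Lemma cycle_edge_neq x : g x != g (ordS x).
Proof. by rewrite (inj_eq g_inj) eq_sym ordS_neq. Qed.

Hypothesis A_linear : linear_mx A.

Lemma linear_cycle_edge (r : 'I_N) x : r != f x -> ~~ (A r (g x) && A r (g (ordS x))).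
Proof.
move=> r_ne; have := A_linear r_ne (cycle_edge_neq x).
by rewrite !fgE Cmat_diag Cmat_ordS !andbT.
Qed.

Hypotheses (k_odd : odd k)
  (k_min : forall k', odd k' -> 3 <= k' -> k' < k -> ~ has_congr_sub A (Cmat k')).

(* Adjacent ones contradict linearity. Otherwise the row closes each of the
   two arcs of the cycle between its ones into a shorter cycle; their lengths
   add up to [k + 2], so as [k] is odd one of them is odd. *)
Lemma no_chord (r : 'I_N) (a b : 'I_k) : r \notin codom f -> a != b ->
  ~ (forall y, A r (g y) = (y == a) || (y == b)).
Proof.
move=> r_out a_neq_b rE.
have r_ne x : r != f x by apply: contraNneq r_out => ->; apply: codom_f.
have not_adj x y : A r (g x) -> A r (g y) -> y != ordS x.
  move=> rx ry; apply: contraNneq (linear_cycle_edge (r_ne x)) => y_eq.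
  by rewrite rx -y_eq ry.
have ra : A r (g a) by rewrite rE eqxx.
have rb : A r (g b) by rewrite rE eqxx orbT.
pose d := (b + k - a) %% k.
have a_to_b : iter d (@ordS k) a = b by apply: iter_ordS_dist.
have d_lt_k : d < k by rewrite ltn_pmod // ltnW.
have b_to_a : iter (k - d) (@ordS k) b = a.
  by rewrite -a_to_b -iterD subnK ?iter_ordS_period // ltnW.
have d_neq0 : d != 0 by apply: contra_neq _ a_neq_b => d0; rewrite -a_to_b d0.
have d_neq1 : d != 1.
  by apply: contra_neq _ (not_adj _ _ ra rb) => d1; rewrite -a_to_b d1.
have kd_neq1 : k - d != 1.
  by apply: contra_neq _ (not_adj _ _ rb ra) => kd1; rewrite -b_to_a kd1.
have odd_kd : odd (k - d) = ~~ odd d by rewrite oddB ?k_odd // ltnW.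
case: (boolP (odd d)) => d_odd.
- apply: (k_min (k' := (k - d).+1)); rewrite /= ?odd_kd ?d_odd //; try lia.
  apply: (arc_congr_sub (t := b) r_out); first by apply/andP; lia.
  by move=> y; rewrite rE b_to_a orbC.
- apply: (k_min (k' := d.+1)); rewrite /= ?d_odd //; try lia.
  apply: (arc_congr_sub (t := a) r_out); first by apply/andP; lia.
  by move=> y; rewrite rE a_to_b.
Qed.

Lemma dominated_by_cycle_row (r : 'I_N) (a : 'I_k) :
  [set y | A r (g y)] \subset [set a] -> dominated A (g @: setT) r (f a).
Proof.
move=> r_sub; apply/andP; split.
- apply/forallP => j; apply/implyP => /imsetP[y _ ->]; apply/implyP => ry.
  have /set1P -> : y \in [set a] by apply: (subsetP r_sub); rewrite inE.
  by rewrite fgE Cmat_diag.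
- apply/existsP; exists (g (ordS a)); rewrite imset_f // fgE Cmat_ordS eqb_id.
  apply: contraFN (ordS_neq a k_gt1) => ry.
  by rewrite -in_set1; apply: (subsetP r_sub); rewrite inE.
Qed.

Lemma cycle_row_not_dominated x (r' : 'I_N) : ~~ dominated A (g @: setT) (f x) r'.
Proof.
apply/andP => [][/forallP le_r' /existsP[j /andP[_ neq_j]]].
have r'_neq : r' != f x by apply: contraNneq neq_j => ->.
have := le_r' (g x); rewrite imset_f // fgE Cmat_diag /= => r'x.
have := le_r' (g (ordS x)); rewrite imset_f // fgE Cmat_ordS /= => r'Sx.
by have := linear_cycle_edge r'_neq; rewrite r'x r'Sx.
Qed.

Lemma up_rows_cycle :
  (forall r, r \notin codom f -> #|[set y | A r (g y)]| <= 2) ->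
  up_rows A (g @: setT) = f @: setT.
Proof.
move=> out_le2; apply/setP => r; rewrite inE; apply/idP/idP; last first.
  by case/imsetP => x _ ->; apply/existsPn => r'; apply: cycle_row_not_dominated.
apply: contraR => r_notin; apply/existsP.
have r_out : r \notin codom f by apply: contra r_notin => /codomP[x ->]; apply: imset_f.
move: (out_le2 r r_out); rewrite leq_eqVlt ltnS leq_eqVlt ltnS leqn0.
case/or3P => [/cards2P[a [b [a_neq_b T_eq]]] | /cards1P[a T_eq] | /eqP/cards0_eq T_eq].
- by case: (no_chord r_out a_neq_b) => y; rewrite -in_set2 -T_eq inE.
- by exists (f a); apply: dominated_by_cycle_row; rewrite T_eq.
- exists (f (Ordinal (ltnW k_gt1))); apply: dominated_by_cycle_row.
  by rewrite T_eq sub0set.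
Qed.

End CycleInMatrix.

Lemma card_Cmat_row_preim n k (g : 'I_k -> 'I_n) (i : 'I_n) :
  injective g -> #|[set y | Cmat n i (g y)]| <= 2.
Proof.
move=> g_inj; rewrite -(card_imset _ g_inj).
apply: leq_trans (subset_leq_card (_ : _ \subset [set i; ordS i])) _.
  by apply/subsetP => z /imsetP[y]; rewrite !inE CmatE => ? ->.
by rewrite cards2 ltnS leq_b1.
Qed.

Lemma linear_rowsub r c R (phi : 'I_R -> 'I_r) (M : 'M[bool]_(r, c)) :
  injective phi -> linear_mx M -> linear_mx (rowsub phi M).
Proof.
move=> phi_inj M_lin i1 i2 j1 j2 i_neq j_neq; rewrite !mxE.
by apply: M_lin; rewrite ?(inj_eq phi_inj).
Qed.

Lemma has_congr_sub_rowsub r c R p q (phi : 'I_R -> 'I_r) (M : 'M[bool]_(r, c))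
    (N : 'M[bool]_(p, q)) :
  injective phi -> has_congr_sub (rowsub phi M) N -> has_congr_sub M N.
Proof.
move=> phi_inj [f [g [f_inj [g_inj fgE]]]]; exists (phi \o f), g.
by split; [exact: inj_comp | split=> // i j; rewrite -fgE mxE].
Qed.

Lemma factor_through_codom (T U V : finType) (phi : T -> U) (f : V -> U) :
  injective f -> (forall x, f x \in codom phi) ->
  exists2 f' : V -> T, injective f' & forall x, phi (f' x) = f x.
Proof.
move=> f_inj f_phi; exists (fun x => iinv (f_phi x)) => [x y|x]; last exact: f_iinv.
by move/(congr1 phi); rewrite !f_iinv; apply: f_inj.
Qed.

Definition col_mx_rows n m h (s : 'I_h -> 'I_m) (r : 'I_(n + h)) : 'I_(n + m) :=
  match split r with inl i => lshift m i | inr j => rshift n (s j) end.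
Arguments col_mx_rows n {m h} s r.

Section ColMxRows.

Variables (n m h : nat) (s : 'I_h -> 'I_m).

Lemma col_mx_rows_lshift i : col_mx_rows n s (lshift h i) = lshift m i.
Proof. by rewrite /col_mx_rows -[lshift h i]/(unsplit (inl i)) unsplitK. Qed.

Lemma col_mx_rows_rshift j : col_mx_rows n s (rshift n j) = rshift n (s j).
Proof. by rewrite /col_mx_rows -[rshift n j]/(unsplit (inr j)) unsplitK. Qed.

Lemma col_mx_rows_inj : injective s -> injective (col_mx_rows n s).
Proof.
move=> s_inj r1 r2.
case: (split_ordP r1) => i1 ->; case: (split_ordP r2) => i2 ->;
  rewrite ?col_mx_rows_lshift ?col_mx_rows_rshift => /eqP;
  by rewrite ?eq_lshift ?eq_rshift ?eq_lrshift ?eq_rlshift ?(inj_eq s_inj) => // /eqP->.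
Qed.

Lemma col_mx_rowsub c (C : 'M[bool]_(n, c)) (F : 'M[bool]_(m, c)) :
  col_mx C (rowsub s F) = rowsub (col_mx_rows n s) (col_mx C F).
Proof.
apply/matrixP => r j; rewrite [RHS]mxE.
case: (split_ordP r) => i ->;
  by rewrite ?col_mx_rows_lshift ?col_mx_rows_rshift ?col_mxEu ?col_mxEd ?mxE.
Qed.

Lemma mem_codom_col_mx_rows (r : 'I_(n + m)) :
  (forall j, r = rshift n j -> j \in codom s) -> r \in codom (col_mx_rows n s).
Proof.
case: (split_ordP r) => [i -> _ | j -> /(_ j erefl) /codomP[j' ->]]; apply/codomP.
  by exists (lshift h i); rewrite col_mx_rows_lshift.
by exists (rshift n j'); rewrite col_mx_rows_rshift.
Qed.

End ColMxRows.

Lemma cycle_copy_uses_lower_rows n m k (F : 'M[bool]_(m, n))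
    (f : 'I_k -> 'I_(n + m)) (g : 'I_k -> 'I_n) :
  1 < k -> k < n -> injective f -> injective g ->
  (forall i j, col_mx (Cmat n) F (f i) (g j) = Cmat k i j) ->
  exists j, rshift n j \in codom f.
Proof.
move=> k_gt1 k_lt_n f_inj g_inj fgE.
suff /existsP[j fj] : [exists j, rshift n j \in codom f] by exists j.
apply: contraT => /existsPn no_lower; exfalso; apply: (Cmat_no_sub_Cmat k_gt1 k_lt_n).
have f_upper x : f x \in codom (@lshift n m).
  case: (split_ordP (f x)) => [i -> | j fx]; first exact: codom_f.
  by have := no_lower j; rewrite -fx codom_f.
have [f' f'_inj f'E] := factor_through_codom f_inj f_upper.
by exists f', g; do 2!split=> //; move=> i j; rewrite -fgE -f'E col_mxEu.
Qed.

Theorem lemma4 (n m : nat) (F : 'M[bool]_(m, n)) (k : nat) :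
  linear_mx (col_mx (Cmat n) F) ->
  is_g (col_mx (Cmat n) F) k ->
  k < n ->
  exists h : nat, 0 < h /\
    exists s : 'I_h -> 'I_m, injective s /\
      contains_up_congr (col_mx (Cmat n) (rowsub s F)) (Cmat k).
Proof.
move=> A_lin [k_odd k_ge3 [f [g [f_inj [g_inj fgE]]]] k_min] k_lt_n.
have k_gt1 : 1 < k by apply: ltnW.
pose J := [set j | rshift n j \in codom f].
have J_gt0 : 0 < #|J|.
  have [j fj] := cycle_copy_uses_lower_rows k_gt1 k_lt_n f_inj g_inj fgE.
  by apply/card_gt0P; exists j; rewrite inE.
exists #|J|; split=> //; exists enum_val; split; first exact: enum_val_inj.
rewrite col_mx_rowsub; set phi := col_mx_rows n _.
have phi_inj : injective phi by apply/col_mx_rows_inj/enum_val_inj.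
have f_phi x : f x \in codom phi.
  apply: mem_codom_col_mx_rows => j fx; have j_J : j \in J by rewrite inE -fx codom_f.
  by rewrite -(enum_rankK_in j_J j_J) codom_f.
have [f' f'_inj f'E] := factor_through_codom f_inj f_phi.
have f'gE i j : rowsub phi (col_mx (Cmat n) F) (f' i) (g j) = Cmat k i j.
  by rewrite mxE f'E fgE.
exists (g @: setT), f', g; split=> //; symmetry; apply: up_rows_cycle => //.
- exact: linear_rowsub.
- by move=> k' k'_odd k'_ge3 k'_lt /(has_congr_sub_rowsub phi_inj); apply: k_min.
- move=> r r_out; case: (split_ordP r) => [i r_i | j r_j]; last first.
    have := enum_valP j; rewrite inE => /codomP[x fx].
    have : phi r = phi (f' x) by rewrite f'E -fx r_j /phi col_mx_rows_rshift.
    by move/phi_inj => r_f'; rewrite r_f' codom_f in r_out.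
  apply: leq_trans (card_Cmat_row_preim i g_inj); apply: subset_leq_card.
  by apply/subsetP => y; rewrite !inE mxE r_i /phi col_mx_rows_lshift col_mxEu.
Qed.
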